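(* Let $(Y,\rho)$ be an infinite compact metric space, let $f:\{0,1\}^{\mathbb{N}}\to Y$ be a continuous surjection, let $\mathcal{D}_f=\{f^{-1}(y):y\in Y\}$ and $h:Y\to\mathcal{D}_f$, $h(y)=f^{-1}(y)$. Suppose $G:\{0,1\}^{\mathbb{N}}\to\{0,1\}^{\mathbb{N}}$ is a continuous onto map which is chaotic and satisfies $G(D)\in\mathcal{D}_f$ for every $D\in\mathcal{D}_f$, and let $H:\mathcal{D}_f\to\mathcal{D}_f$, $H(D)=G(D)$. Then $h$ is a homeomorphism onto $(\mathcal{D}_f,\tau(\mathcal{D}_f))$ and $F=h^{-1}\circ H\circ h:Y\to Y$ is a continuous onto map that is chaotic on $Y$.
   Context: $\{0,1\}^{\mathbb{N}}$ carries the product topology of the discrete topology on $\{0,1\}$, metrized by $d(\psi,\varphi)=\sum_{i\ge1}|\psi(i)-\varphi(i)|/2^i$. The decomposition topology on $\mathcal{D}_f$ is $\{\mathcal{U}\subset\mathcal{D}_f:\bigcup\mathcal{U}\text{ open}\}$. A map $g$ on a metric space $(Z,d)$ is chaotic (Devaney) if it is onto, topologically transitive (for nonempty open $U,V$ there is $n>0$ with $g^n(U)\cap V\neq\emptyset$), has a dense set of periodic points, and is sensitive to initial conditions (there is $\eta>0$ such that for every $x$ and neighbourhood $N$ of $x$ there are $y\in N$, $n\ge0$ with $d(g^n(x),g^n(y))>\eta$). *)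

From Stdlib Require Import Reals Lra List ClassicalEpsilon.
Open Scope R_scope.

Definition is_metric {X : Type} (d : X -> X -> R) : Prop :=
  (forall x y, 0 <= d x y) /\
  (forall x y, d x y = 0 <-> x = y) /\
  (forall x y, d x y = d y x) /\
  (forall x y z, d x z <= d x y + d y z).

Definition ball {X : Type} (d : X -> X -> R) (x : X) (r : R) : X -> Prop :=
  fun y => d x y < r.

Definition metric_open {X : Type} (d : X -> X -> R) (U : X -> Prop) : Prop :=
  forall x, U x -> exists eps, 0 < eps /\ forall y, ball d x eps y -> U y.

Definition nbhd {X : Type} (d : X -> X -> R) (x : X) (N : X -> Prop) : Prop :=
  exists V, metric_open d V /\ V x /\ (forall y, V y -> N y).

Definition metric_compact {X : Type} (d : X -> X -> R) : Prop :=
  forall (I : Type) (U : I -> X -> Prop),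
    (forall i, metric_open d (U i)) ->
    (forall x, exists i, U i x) ->
    exists l : list I, forall x, exists i, In i l /\ U i x.

Definition infinite_type (X : Type) : Prop :=
  forall l : list X, exists x, ~ In x l.

Definition metric_continuous {X Z : Type} (dX : X -> X -> R) (dZ : Z -> Z -> R)
  (g : X -> Z) : Prop :=
  forall x eps, 0 < eps -> exists delta, 0 < delta /\
    forall y, dX x y < delta -> dZ (g x) (g y) < eps.

Definition onto {X Z : Type} (g : X -> Z) : Prop := forall z, exists x, g x = z.

Definition top_transitive {X : Type} (d : X -> X -> R) (g : X -> X) : Prop :=
  forall U V, metric_open d U -> metric_open d V ->
    (exists x, U x) -> (exists x, V x) ->
    exists n, (0 < n)%nat /\ exists x, U x /\ V (Nat.iter n g x).

Definition periodic_point {X : Type} (g : X -> X) (p : X) : Prop :=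
  exists n, (0 < n)%nat /\ Nat.iter n g p = p.

Definition dense_periodic {X : Type} (d : X -> X -> R) (g : X -> X) : Prop :=
  forall x eps, 0 < eps -> exists p, periodic_point g p /\ d x p < eps.

Definition sensitive {X : Type} (d : X -> X -> R) (g : X -> X) : Prop :=
  exists eta, 0 < eta /\ forall x N, nbhd d x N ->
    exists y n, N y /\ d (Nat.iter n g x) (Nat.iter n g y) > eta.

Definition chaotic {X : Type} (d : X -> X -> R) (g : X -> X) : Prop :=
  onto g /\ top_transitive d g /\ dense_periodic d g /\ sensitive d g.

(* Sequences psi(1), psi(2), ... are encoded as c : nat -> bool with c i = psi(i+1). *)
Definition cantor := nat -> bool.
Definition b2R (b : bool) : R := if b then 1 else 0.
Definition cantor_term (p q : cantor) (i : nat) : R :=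
  Rabs (b2R (p i) - b2R (q i)) / 2 ^ (S i).
Definition is_cantor_metric (d : cantor -> cantor -> R) : Prop :=
  forall p q, infinite_sum (cantor_term p q) (d p q).

Definition fiber {Y : Type} (f : cantor -> Y) (y : Y) : cantor -> Prop :=
  fun x => f x = y.

Definition Dspace {Y : Type} (f : cantor -> Y) : Type :=
  { D : cantor -> Prop | exists y, D = fiber f y }.

Definition h_map {Y : Type} (f : cantor -> Y) (y : Y) : Dspace f :=
  exist _ (fiber f y) (ex_intro _ y eq_refl).

Definition image_set {X : Type} (g : X -> X) (D : X -> Prop) : X -> Prop :=
  fun x => exists z, D z /\ g z = x.

Definition decomp_open {Y : Type} (d : cantor -> cantor -> R) (f : cantor -> Y)
  (U : Dspace f -> Prop) : Prop :=
  metric_open d (fun x => exists D : Dspace f, U D /\ proj1_sig D x).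

Definition maps_fibers {Y : Type} (f : cantor -> Y) (G : cantor -> cantor) : Prop :=
  forall D : Dspace f, exists D' : Dspace f, image_set G (proj1_sig D) = proj1_sig D'.

Definition H_map {Y : Type} (f : cantor -> Y) (G : cantor -> cantor)
  (HG : maps_fibers f G) (D : Dspace f) : Dspace f :=
  proj1_sig (constructive_indefinite_description _ (HG D)).

Definition bijective {A B : Type} (g : A -> B) : Prop :=
  (forall a a', g a = g a' -> a = a') /\ (forall b, exists a, g a = b).

Definition homeomorphism {A B : Type} (openA : (A -> Prop) -> Prop)
  (openB : (B -> Prop) -> Prop) (g : A -> B) : Prop :=
  bijective g /\
  (forall V, openB V -> openA (fun a => V (g a))) /\
  (forall U, openA U -> openB (fun b => exists a, U a /\ g a = b)).

From Stdlib Require Import Reals.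
Open Scope R_scope.
From Stdlib Require Import Lra Lia Arith List Classical ClassicalEpsilon ProofIrrelevance.

(* Since [f] semiconjugates [G] to [F] ([f o G = F o f], because [G] maps the
   fibre over [y] onto the fibre over [F y]), the map [h] identifies [Y] with
   the decomposition space, and [F] inherits from [G] everything that passes
   to factors: surjectivity, transitivity and density of periodic points
   (images under the continuous surjection [f]).  Continuity of [F] and of
   [h^-1] comes from [f] being a quotient map, which holds because Cantor
   space is sequentially compact.  Sensitivity does not pass to factors; it
   is recovered on [Y] by the theorem of Banks et al.: on an infinite metric
   space, a continuous transitive map with dense periodic points is
   sensitive. *)

Lemma iter_periodic_mul {X} (g : X -> X) n p :
  Nat.iter n g p = p -> forall k, Nat.iter (k * n) g p = p.
Proof.
  intros Hp k; induction k as [|k IH]; [reflexivity|].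
  replace (S k * n)%nat with (n + k * n)%nat by lia.
  rewrite Nat.iter_add, IH; exact Hp.
Qed.

Lemma iter_periodic_mod {X} (g : X -> X) n p :
  (0 < n)%nat -> Nat.iter n g p = p ->
  forall m, Nat.iter m g p = Nat.iter (m mod n) g p.
Proof.
  intros Hn Hp m.
  transitivity (Nat.iter (m mod n + n * (m / n)) g p).
  - f_equal. rewrite Nat.add_comm. apply Nat.div_mod. lia.
  - rewrite Nat.iter_add, Nat.mul_comm, iter_periodic_mul; auto.
Qed.

Lemma iter_periodic_above {X} (g : X -> X) n p k :
  (0 < n)%nat -> Nat.iter n g p = p ->
  exists i, (i <= n)%nat /\ Nat.iter (i + k) g p = p.
Proof.
  intros Hn Hp. exists (n - k mod n)%nat. split; [lia|].
  pose proof (Nat.div_mod k n ltac:(lia)). pose proof (Nat.mod_upper_bound k n ltac:(lia)).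
  replace (n - k mod n + k)%nat with ((k / n + 1) * n)%nat by nia.
  apply iter_periodic_mul; exact Hp.
Qed.

Lemma common_small_radius (P : nat -> R -> Prop) (n : nat) :
  (forall i, (i < n)%nat -> exists e, 0 < e /\ forall e', 0 < e' -> e' <= e -> P i e') ->
  exists e, 0 < e /\ forall i, (i < n)%nat -> P i e.
Proof.
  intros H.
  assert (Hmono : exists e, 0 < e /\ forall e', 0 < e' -> e' <= e ->
                    forall i, (i < n)%nat -> P i e').
  { induction n as [|n IH].
    - exists 1; split; [lra | intros; lia].
    - destruct IH as [e1 [He1 H1]]; [intros i Hi; apply H; lia|].
      destruct (H n (Nat.lt_succ_diag_r n)) as [e2 [He2 H2]].
      exists (Rmin e1 e2). split; [apply Rmin_case; lra|].
      intros e' He' Hle i Hi.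
      pose proof (Rmin_l e1 e2). pose proof (Rmin_r e1 e2).
      destruct (Nat.eq_dec i n) as [->|Hne]; [apply H2 | apply H1]; try lra; lia. }
  destruct Hmono as [e [He Hall]].
  exists e. split; [exact He|]. apply Hall; lra.
Qed.

Lemma open_ext {X} (d : X -> X -> R) (P Q : X -> Prop) :
  (forall x, P x <-> Q x) -> metric_open d P -> metric_open d Q.
Proof.
  intros E HP x Qx. destruct (HP x (proj2 (E x) Qx)) as [e [He H]].
  exists e; split; auto. intros y Hy; apply E, H, Hy.
Qed.

Lemma continuous_open_preimage {X Z} dX dZ (g : X -> Z) U :
  metric_continuous dX dZ g -> metric_open dZ U -> metric_open dX (fun x => U (g x)).
Proof.
  intros Hg HU x Ux. destruct (HU (g x) Ux) as [e [He H]].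
  destruct (Hg x e He) as [dl [Hdl H2]]. exists dl; split; auto.
  intros y Hy. apply H, H2, Hy.
Qed.

Section MetricSpace.
Variable Y : Type.
Variable rho : Y -> Y -> R.
Hypothesis Hrho : is_metric rho.

Lemma rho_nonneg x y : 0 <= rho x y. Proof. apply Hrho. Qed.
Lemma rho_refl x : rho x x = 0. Proof. apply Hrho; reflexivity. Qed.
Lemma rho_sym x y : rho x y = rho y x. Proof. apply Hrho. Qed.
Lemma rho_triangle x y z : rho x z <= rho x y + rho y z. Proof. apply Hrho. Qed.

Lemma rho_pos x y : x <> y -> 0 < rho x y.
Proof.
  intros H. destruct (rho_nonneg x y) as [h|h]; auto.
  exfalso; apply H, Hrho; auto.
Qed.

Lemma ball_open x r : metric_open rho (ball rho x r).
Proof.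
  intros y Hy. unfold ball in *. exists (r - rho x y). split; [lra|].
  intros z Hz. pose proof (rho_triangle x y z). lra.
Qed.

Lemma ball_center x r : 0 < r -> ball rho x r x.
Proof. intros Hr. unfold ball. rewrite rho_refl. exact Hr. Qed.

Lemma iter_continuous (F : Y -> Y) :
  metric_continuous rho rho F -> forall n, metric_continuous rho rho (Nat.iter n F).
Proof.
  intros HF n; induction n as [|n IH]; intros x eps He.
  - exists eps; split; auto.
  - destruct (HF (Nat.iter n F x) eps He) as [d1 [Hd1 H1]].
    destruct (IH x d1 Hd1) as [d2 [Hd2 H2]].
    exists d2; split; auto. intros y Hy. apply H1, H2, Hy.
Qed.

Lemma iter_continuous_upto (F : Y -> Y) :
  metric_continuous rho rho F ->
  forall n q eta, 0 < eta -> exists delta, 0 < delta /\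
    forall z, rho q z < delta -> forall i, (i < n)%nat ->
      rho (Nat.iter i F q) (Nat.iter i F z) < eta.
Proof.
  intros HF n q eta Heta.
  destruct (common_small_radius
     (fun i e => forall z, rho q z < e -> rho (Nat.iter i F q) (Nat.iter i F z) < eta) n)
    as [e [He He']].
  { intros i Hi. destruct (iter_continuous F HF i q eta Heta) as [d [Hd H]].
    exists d; split; auto. intros e' _ Hle z Hz. apply H; lra. }
  exists e; split; auto.
Qed.

Section Banks.
Variable F : Y -> Y.

Lemma dist_periodic_orbit_pos q n z :
  (0 < n)%nat -> Nat.iter n F q = q -> (forall i, Nat.iter i F q <> z) ->
  exists e, 0 < e /\ forall i, e <= rho z (Nat.iter i F q).
Proof.
  intros Hn Hq Hz.
  destruct (common_small_radius (fun i e => e <= rho z (Nat.iter i F q)) n) as [e [He He']].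
  { intros i _. exists (rho z (Nat.iter i F q)). split; [|intros; lra].
    apply rho_pos. intro E. apply (Hz i). auto. }
  exists e. split; [exact He|]. intros i.
  rewrite (iter_periodic_mod F n q Hn Hq). apply He', Nat.mod_upper_bound. lia.
Qed.

Lemma periodic_orbit_avoid q n :
  infinite_type Y -> (0 < n)%nat -> Nat.iter n F q = q ->
  exists z, forall i, Nat.iter i F q <> z.
Proof.
  intros Hinf Hn Hq.
  destruct (Hinf (map (fun i => Nat.iter i F q) (seq 0 n))) as [z Hz].
  exists z. intros i Heq. apply Hz.
  rewrite (iter_periodic_mod F n q Hn Hq) in Heq. rewrite <- Heq.
  apply (in_map (fun i => Nat.iter i F q)), in_seq.
  pose proof (Nat.mod_upper_bound i n). lia.
Qed.

(* Two points of the same periodic orbit lie on each other's orbits. *)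
Lemma periodic_orbits_disjoint q1 q2 n2 :
  (0 < n2)%nat -> Nat.iter n2 F q2 = q2 -> (forall i, Nat.iter i F q1 <> q2) ->
  forall i j, Nat.iter i F q1 <> Nat.iter j F q2.
Proof.
  intros Hn2 Hq2 Hout i j E. apply (Hout ((n2 * (j + 1) - j) + i)%nat).
  rewrite Nat.iter_add, E, <- Nat.iter_add.
  replace (n2 * (j + 1) - j + j)%nat with ((j + 1) * n2)%nat by nia.
  apply iter_periodic_mul; exact Hq2.
Qed.

Lemma far_periodic_orbit :
  infinite_type Y -> dense_periodic rho F ->
  exists eta, 0 < eta /\ forall x, exists q, periodic_point F q /\
    forall i, eta <= rho x (Nat.iter i F q).
Proof.
  intros Hinf Hdp.
  destruct (Hinf nil) as [y0 _].
  destruct (Hdp y0 1 Rlt_0_1) as [q1 [[n1 [Hn1 Hq1]] _]].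
  destruct (periodic_orbit_avoid q1 n1 Hinf Hn1 Hq1) as [z Hz].
  destruct (dist_periodic_orbit_pos q1 n1 z Hn1 Hq1 Hz) as [e [He He']].
  destruct (Hdp z e He) as [q2 [[n2 [Hn2 Hq2]] Hzq2]].
  assert (Hout : forall i, Nat.iter i F q1 <> q2).
  { intros i E. specialize (He' i). rewrite E in He'. lra. }
  pose proof (periodic_orbits_disjoint q1 q2 n2 Hn2 Hq2 Hout) as Hdis.
  destruct (common_small_radius
     (fun j e => forall i, e <= rho (Nat.iter j F q2) (Nat.iter i F q1)) n2)
    as [d0 [Hd0 Hd0']].
  { intros j _.
    destruct (dist_periodic_orbit_pos q1 n1 (Nat.iter j F q2) Hn1 Hq1) as [e2 [He2 He2']].
    { intros i; apply Hdis. }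
    exists e2. split; [exact He2|]. intros e' _ Hle i. specialize (He2' i). lra. }
  assert (Hsep : forall i j, d0 <= rho (Nat.iter i F q1) (Nat.iter j F q2)).
  { intros i j. rewrite rho_sym, (iter_periodic_mod F n2 q2 Hn2 Hq2 j).
    apply Hd0', Nat.mod_upper_bound. lia. }
  exists (d0 / 2). split; [lra|]. intros x.
  destruct (classic (exists i, rho x (Nat.iter i F q1) < d0 / 2)) as [[i Hi]|Hfar].
  - exists q2. split; [exists n2; auto|]. intros j.
    pose proof (rho_triangle (Nat.iter i F q1) x (Nat.iter j F q2)).
    rewrite (rho_sym (Nat.iter i F q1) x) in H. pose proof (Hsep i j). lra.
  - exists q1. split; [exists n1; auto|]. intros i.
    apply Rnot_lt_le. intro Hi. apply Hfar; eauto.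
Qed.

(* Banks, Brooks, Cairns, Davis, Stacey: the periodic point near [x] and the
   transitive point near [x] cannot both shadow [x] once the orbit of the
   latter follows a periodic orbit far from [x]. *)
Theorem transitive_dense_periodic_sensitive :
  infinite_type Y -> metric_continuous rho rho F ->
  top_transitive rho F -> dense_periodic rho F -> sensitive rho F.
Proof.
  intros Hinf HF Htr Hdp.
  destruct (far_periodic_orbit Hinf Hdp) as [eta4 [Heta4 Horb]].
  set (eta := eta4 / 4).
  exists eta. split; [unfold eta; lra|].
  intros x N [V [HV [Vx HVN]]].
  destruct (HV x Vx) as [eps [Heps HeV]].
  set (r := Rmin eps eta).
  assert (Hr : 0 < r /\ r <= eps /\ r <= eta).
  { unfold r, eta; split; [apply Rmin_case; lra | split; [apply Rmin_l | apply Rmin_r]]. }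
  destruct (Hdp x r ltac:(lra)) as [p [[n [Hn Hp]] Hxp]].
  destruct (Horb x) as [q [_ Hq]].
  destruct (iter_continuous_upto F HF (S n) q eta ltac:(unfold eta; lra)) as [delta [Hdelta Hdel]].
  destruct (Htr (ball rho x r) (ball rho q delta) (ball_open x r) (ball_open q delta))
    as [k [_ [y [Hy Hyk]]]];
    [exists x; apply ball_center; lra | exists q; apply ball_center; lra |].
  unfold ball in Hy, Hyk.
  destruct (iter_periodic_above F n p k Hn Hp) as [i [Hi Hm]].
  set (m := (i + k)%nat) in Hm.
  assert (Hmy : rho (Nat.iter i F q) (Nat.iter m F y) < eta).
  { unfold m. rewrite Nat.iter_add. apply Hdel; [exact Hyk | lia]. }
  destruct (classic (rho (Nat.iter m F x) (Nat.iter m F p) > eta)) as [H1|H1];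
    [exists p, m; split; auto; apply HVN, HeV; unfold ball; lra|].
  destruct (classic (rho (Nat.iter m F x) (Nat.iter m F y) > eta)) as [H2|H2];
    [exists y, m; split; auto; apply HVN, HeV; unfold ball; lra|].
  exfalso. rewrite Hm in H1.
  pose proof (Hq i).
  pose proof (rho_triangle x p (Nat.iter i F q)).
  pose proof (rho_triangle p (Nat.iter m F y) (Nat.iter i F q)).
  pose proof (rho_triangle p (Nat.iter m F x) (Nat.iter m F y)).
  rewrite (rho_sym p (Nat.iter m F x)) in H4.
  rewrite (rho_sym (Nat.iter m F y) (Nat.iter i F q)) in H3.
  unfold eta in *. lra.
Qed.

End Banks.
End MetricSpace.

Definition agree_upto (k : nat) (a b : cantor) : Prop := forall i, (i < k)%nat -> a i = b i.

Definition frequently_agree (s : nat -> cantor) (c : cantor) (k : nat) : Prop :=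
  forall N, exists n, (N <= n)%nat /\ agree_upto k (s n) c.

Definition extend_prefix (c : cantor) (k : nat) (b : bool) : cantor :=
  fun i => if Nat.ltb i k then c i else b.

Lemma frequently_agree_extend s c k :
  frequently_agree s c k ->
  frequently_agree s (extend_prefix c k true) (S k) \/
  frequently_agree s (extend_prefix c k false) (S k).
Proof.
  intros H. apply NNPP; intro Hn. apply not_or_and in Hn as [H1 H2].
  apply not_all_ex_not in H1 as [N1 H1]. apply not_all_ex_not in H2 as [N2 H2].
  destruct (H (Nat.max N1 N2)) as [n [Hn Ha]].
  assert (Hb : agree_upto (S k) (s n) (extend_prefix c k (s n k))).
  { intros i Hi. unfold extend_prefix. destruct (Nat.ltb_spec i k).
    - apply Ha; auto.
    - replace i with k by lia. reflexivity. }
  destruct (s n k); [apply H1 | apply H2]; exists n; split; auto; lia.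
Qed.

(* König's lemma on the binary tree: prefixes are chosen one bit at a time,
   always keeping infinitely many terms of [s] above the current prefix. *)
Section ClusterPoint.
Variable s : nat -> cantor.

Fixpoint cluster_prefix (k : nat) : cantor :=
  match k with
  | O => fun _ => false
  | S k =>
      let c := cluster_prefix k in
      if excluded_middle_informative (frequently_agree s (extend_prefix c k true) (S k))
      then extend_prefix c k true else extend_prefix c k false
  end.

Lemma cluster_prefix_frequent k : frequently_agree s (cluster_prefix k) k.
Proof.
  induction k as [|k IH].
  - intros N. exists N. split; auto. intros i Hi; lia.
  - simpl. destruct (excluded_middle_informative _) as [h|h]; auto.
    destruct (frequently_agree_extend s _ _ IH); tauto.
Qed.

Lemma cluster_prefix_stable i m : (S i <= m)%nat -> cluster_prefix m i = cluster_prefix (S i) i.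
Proof.
  induction m as [|m IH]; intros H; [lia|].
  destruct (Nat.eq_dec (S i) (S m)) as [E|E]; [rewrite E; auto|].
  assert (Hl : Nat.ltb i m = true) by (apply Nat.ltb_lt; lia).
  simpl cluster_prefix at 1.
  destruct (excluded_middle_informative _); unfold extend_prefix; rewrite Hl; apply IH; lia.
Qed.

Lemma cantor_cluster_point : exists x, forall k, frequently_agree s x k.
Proof.
  exists (fun i => cluster_prefix (S i) i). intros k N.
  destruct (cluster_prefix_frequent k N) as [n [Hn Ha]]. exists n. split; auto.
  intros i Hi. rewrite Ha by auto. apply cluster_prefix_stable. lia.
Qed.

End ClusterPoint.

Lemma Un_cv_le (u : nat -> R) l M : Un_cv u l -> (forall n, u n <= M) -> l <= M.
Proof.
  intros H HM. apply Rnot_lt_le. intro Hl.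
  destruct (H (l - M) ltac:(lra)) as [N HN].
  specialize (HN N (le_n N)). specialize (HM N). unfold Rdist in HN.
  apply Rabs_def2 in HN. lra.
Qed.

Lemma sum_f_R0_le_telescope (u v : nat -> R) :
  (forall i, u i <= v i - v (S i)) -> forall n, sum_f_R0 u n <= v O - v (S n).
Proof.
  intros H n. induction n as [|n IH]; simpl; [apply H|].
  specialize (H (S n)). lra.
Qed.

Lemma pow2_inv_pos n : 0 < / 2 ^ n.
Proof. apply Rinv_0_lt_compat, pow_lt; lra. Qed.

Lemma pow2_inv_le m n : (m <= n)%nat -> / 2 ^ n <= / 2 ^ m.
Proof. intros H. apply Rinv_le_contravar; [apply pow_lt; lra|]. apply Rle_pow; [lra|lia]. Qed.

Lemma pow2_inv_small eps : 0 < eps -> exists k, / 2 ^ k < eps.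
Proof.
  intros He. destruct (pow_lt_1_zero (/ 2) ltac:(rewrite Rabs_pos_eq; lra) eps He) as [N HN].
  exists N. specialize (HN N (le_n N)).
  rewrite pow_inv, Rabs_pos_eq in HN; [exact HN|]. left; apply pow2_inv_pos.
Qed.

(* Each term of the series is dominated by [v i - v (S i)] with
   [v i = / 2 ^ (max i k)], which telescopes to at most [/ 2 ^ k]. *)
Lemma cantor_dist_agree_upto d :
  is_cantor_metric d -> forall k p q, agree_upto k p q -> d p q <= / 2 ^ k.
Proof.
  intros Hd k p q A.
  set (v i := / 2 ^ Nat.max i k).
  apply (Un_cv_le (sum_f_R0 (cantor_term p q))); [apply Hd|].
  intros n. apply Rle_trans with (v O - v (S n)).
  2:{ pose proof (pow2_inv_pos (Nat.max (S n) k)). unfold v. rewrite Nat.max_0_l. lra. }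
  apply sum_f_R0_le_telescope. intros i. unfold cantor_term, v.
  destruct (Nat.ltb_spec i k).
  - rewrite (A i), Rminus_diag, Rabs_R0 by auto.
    rewrite !Nat.max_r by lia. lra.
  - rewrite !Nat.max_l by lia.
    assert (Hb : Rabs (b2R (p i) - b2R (q i)) <= 1)
      by (destruct (p i), (q i); simpl; apply Rabs_le; lra).
    pose proof (Rabs_pos (b2R (p i) - b2R (q i))).
    pose proof (pow2_inv_pos (S i)).
    replace (/ 2 ^ i - / 2 ^ S i) with (/ 2 ^ S i)
      by (simpl; field; apply pow_nonzero; lra).
    unfold Rdiv. rewrite <- (Rmult_1_l (/ 2 ^ S i)) at 2.
    apply Rmult_le_compat_r; lra.
Qed.

Section FactorOfCantor.
Variable Y : Type.
Variable rho : Y -> Y -> R.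
Variable d : cantor -> cantor -> R.
Variable f : cantor -> Y.
Hypothesis Hrho : is_metric rho.
Hypothesis Hd : is_cantor_metric d.
Hypothesis Hfc : metric_continuous d rho f.
Hypothesis Hfo : onto f.

Lemma cluster_point_fiber (s : nat -> cantor) y x :
  (forall n, rho y (f (s n)) < / 2 ^ n) -> (forall k, frequently_agree s x k) -> f x = y.
Proof.
  intros Hs Hx. apply NNPP; intro Hne.
  assert (He : 0 < rho y (f x)) by (apply rho_pos; auto).
  set (e := rho y (f x)) in *.
  destruct (Hfc x (e / 2) ltac:(lra)) as [delta [Hdel Hc]].
  destruct (pow2_inv_small delta Hdel) as [k Hk].
  destruct (pow2_inv_small (e / 2) ltac:(lra)) as [N HN].
  destruct (Hx k N) as [n [Hn Ha]].
  assert (Hxn : d x (s n) < delta).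
  { assert (Hag : agree_upto k x (s n)) by (intros i Hi; symmetry; auto).
    pose proof (cantor_dist_agree_upto d Hd k x (s n) Hag). lra. }
  specialize (Hc (s n) Hxn). specialize (Hs n). pose proof (pow2_inv_le N n Hn).
  pose proof (rho_triangle Y rho Hrho y (f (s n)) (f x)) as T.
  rewrite (rho_sym Y rho Hrho (f (s n)) (f x)) in T. unfold e in *. lra.
Qed.

Lemma cantor_surjection_quotient A : metric_open d (fun x => A (f x)) -> metric_open rho A.
Proof.
  intros HA y Ay. apply NNPP; intro Hno.
  assert (Hpt : forall n, exists x, rho y (f x) < / 2 ^ n /\ ~ A (f x)).
  { intros n. apply NNPP; intro Hn. apply Hno. exists (/ 2 ^ n).
    split; [apply pow2_inv_pos|].
    intros z Hz. destruct (Hfo z) as [x <-]. apply NNPP; intro HAn. apply Hn; eauto. }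
  apply choice in Hpt as [s Hs].
  destruct (cantor_cluster_point s) as [x Hx].
  assert (Hfx : f x = y) by (apply (cluster_point_fiber s); [apply Hs | exact Hx]).
  rewrite <- Hfx in Ay. destruct (HA x Ay) as [eps [Heps Hb]].
  destruct (pow2_inv_small eps Heps) as [k Hk].
  destruct (Hx k O) as [n [_ Ha]].
  assert (Hag : agree_upto k x (s n)) by (intros i Hi; symmetry; auto).
  pose proof (cantor_dist_agree_upto d Hd k x (s n) Hag).
  apply (proj2 (Hs n)), Hb. unfold ball. lra.
Qed.

Lemma h_map_fiber (D : Dspace f) y : proj1_sig D = fiber f y -> h_map f y = D.
Proof.
  destruct D as [P pf]; simpl; intro E; subst P. unfold h_map. f_equal. apply proof_irrelevance.
Qed.

Lemma decomp_union_h_map (V : Dspace f -> Prop) x :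
  (exists D : Dspace f, V D /\ proj1_sig D x) <-> V (h_map f (f x)).
Proof.
  split.
  - intros [D [VD Dx]]. destruct (proj2_sig D) as [y Ey].
    assert (Hy : f x = y) by (rewrite Ey in Dx; exact Dx).
    rewrite Hy, (h_map_fiber D y Ey). exact VD.
  - intros HV. exists (h_map f (f x)). split; [exact HV | reflexivity].
Qed.

Lemma h_map_homeomorphism : homeomorphism (metric_open rho) (decomp_open d f) (h_map f).
Proof.
  split; [split|split].
  - intros a a' E. apply (f_equal (@proj1_sig _ _)) in E. simpl in E.
    destruct (Hfo a) as [x Hx].
    assert (Hx' : fiber f a x) by exact Hx.
    rewrite E in Hx'. unfold fiber in Hx'. congruence.
  - intros D. destruct (proj2_sig D) as [y Ey]. exists y. apply h_map_fiber; exact Ey.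
  - intros V HV. apply cantor_surjection_quotient.
    eapply open_ext; [|exact HV]. intros x; apply decomp_union_h_map.
  - intros U HU. unfold decomp_open.
    eapply open_ext; [|exact (continuous_open_preimage d rho f U Hfc HU)].
    intros x; simpl. split.
    + intros Ux. exists (h_map f (f x)). split; [exists (f x); auto | reflexivity].
    + intros [D [[y [Uy <-]] Dx]]. simpl in Dx. unfold fiber in Dx. rewrite Dx; exact Uy.
Qed.

Lemma cantor_factor_continuous (G : cantor -> cantor) (F : Y -> Y) :
  metric_continuous d d G -> (forall x, f (G x) = F (f x)) -> metric_continuous rho rho F.
Proof.
  intros HGc Hsemi y eps He.
  assert (Ho : metric_open rho (fun z => ball rho (F y) eps (F z))).
  { apply cantor_surjection_quotient.
    apply open_ext with (P := fun x => ball rho (F y) eps (f (G x))).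
    { intros x; rewrite Hsemi; tauto. }
    apply (continuous_open_preimage d d G (fun x => ball rho (F y) eps (f x)) HGc).
    apply (continuous_open_preimage d rho f); [exact Hfc | apply ball_open; exact Hrho]. }
  destruct (Ho y) as [dl [Hdl H]]; [apply ball_center; auto|].
  exists dl; split; [exact Hdl|]. intros z Hz. apply (H z Hz).
Qed.

End FactorOfCantor.

Section Factor.
Variables (X Y : Type) (dX : X -> X -> R) (rho : Y -> Y -> R).
Variables (f : X -> Y) (G : X -> X) (F : Y -> Y).
Hypothesis Hfc : metric_continuous dX rho f.
Hypothesis Hfo : onto f.
Hypothesis Hsemi : forall x, f (G x) = F (f x).

Lemma semiconj_iter n x : f (Nat.iter n G x) = Nat.iter n F (f x).
Proof. apply Nat.iter_swap_gen. exact Hsemi. Qed.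

Lemma factor_onto : onto G -> onto F.
Proof.
  intros HGo z. destruct (Hfo z) as [x <-]. destruct (HGo x) as [x' <-].
  exists (f x'). symmetry; apply Hsemi.
Qed.

Lemma factor_top_transitive : top_transitive dX G -> top_transitive rho F.
Proof.
  intros Htr U V HU HV [u Uu] [v Vv].
  destruct (Hfo u) as [xu <-]. destruct (Hfo v) as [xv <-].
  destruct (Htr (fun x => U (f x)) (fun x => V (f x))
              (continuous_open_preimage dX rho f U Hfc HU)
              (continuous_open_preimage dX rho f V Hfc HV)
              (ex_intro _ xu Uu) (ex_intro _ xv Vv)) as [n [Hn [x [Ux Vx]]]].
  exists n. split; [exact Hn|]. exists (f x). split; [exact Ux|].
  rewrite <- semiconj_iter; exact Vx.
Qed.

Lemma factor_dense_periodic : dense_periodic dX G -> dense_periodic rho F.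
Proof.
  intros Hdp y eps He. destruct (Hfo y) as [x <-].
  destruct (Hfc x eps He) as [dl [Hdl H]].
  destruct (Hdp x dl Hdl) as [p [[n [Hn Hp]] Hxp]].
  exists (f p). split; [|apply H; exact Hxp].
  exists n. split; [exact Hn|]. rewrite <- semiconj_iter, Hp. reflexivity.
Qed.

End Factor.

Lemma H_map_semiconj {Y} (f : cantor -> Y) (G : cantor -> cantor) (HG : maps_fibers f G)
  (F : Y -> Y) :
  (forall y, h_map f (F y) = H_map f G HG (h_map f y)) -> forall x, f (G x) = F (f x).
Proof.
  intros HF x. pose proof (f_equal (@proj1_sig _ _) (HF (f x))) as E. simpl in E.
  unfold H_map in E.
  destruct (constructive_indefinite_description _ (HG (h_map f (f x)))) as [D' HD'].
  simpl in E, HD'. rewrite <- E in HD'.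
  assert (Hi : image_set G (fiber f (f x)) (G x)) by (exists x; split; reflexivity).
  rewrite HD' in Hi. exact Hi.
Qed.

Lemma H_map_conjugate_exists {Y} (f : cantor -> Y) (G : cantor -> cantor) (HG : maps_fibers f G) :
  exists F : Y -> Y, forall y, h_map f (F y) = H_map f G HG (h_map f y).
Proof.
  assert (Hch : forall y, exists y', proj1_sig (H_map f G HG (h_map f y)) = fiber f y')
    by (intros y; exact (proj2_sig (H_map f G HG (h_map f y)))).
  apply choice in Hch as [F HF].
  exists F. intros y. apply h_map_fiber, HF.
Qed.

Theorem mainTheorem7 (Y : Type) (rho : Y -> Y -> R)
  (d : cantor -> cantor -> R) (f : cantor -> Y) (G : cantor -> cantor)
  (Hd : is_cantor_metric d)
  (Hrho : is_metric rho) (Hcomp : metric_compact rho) (Hinf : infinite_type Y)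
  (Hfc : metric_continuous d rho f) (Hfo : onto f)
  (HGc : metric_continuous d d G) (HGo : onto G) (HGch : chaotic d G)
  (HG : maps_fibers f G) :
  homeomorphism (metric_open rho) (decomp_open d f) (h_map f) /\
  (exists F : Y -> Y, forall y, h_map f (F y) = H_map f G HG (h_map f y)) /\
  (forall F : Y -> Y, (forall y, h_map f (F y) = H_map f G HG (h_map f y)) ->
     metric_continuous rho rho F /\ onto F /\ chaotic rho F).
Proof.
  split; [exact (h_map_homeomorphism Y rho d f Hrho Hd Hfc Hfo)|].
  split; [exact (H_map_conjugate_exists f G HG)|].
  intros F HF.
  pose proof (H_map_semiconj f G HG F HF) as Hsemi.
  destruct HGch as [_ [Htr [Hdp _]]].
  assert (HFc : metric_continuous rho rho F)
    by exact (cantor_factor_continuous Y rho d f Hrho Hd Hfc Hfo G F HGc Hsemi).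
  assert (HFtr : top_transitive rho F)
    by exact (factor_top_transitive _ _ d rho f G F Hfc Hfo Hsemi Htr).
  assert (HFdp : dense_periodic rho F)
    by exact (factor_dense_periodic _ _ d rho f G F Hfc Hfo Hsemi Hdp).
  assert (HFo : onto F) by exact (factor_onto _ _ f G F Hfo Hsemi HGo).
  repeat split; try assumption.
  exact (transitive_dense_periodic_sensitive Y rho Hrho F Hinf HFc HFtr HFdp).
Qed.
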